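(* Let $l\ge0$ be an integer and $r$ a real number with $\frac{l}{2l+1}<r<\frac12$, and put $\delta=r-\frac{l}{2l+1}$. If $X\subseteq S^1$ is a finite subset with $\mathrm{wf}_{<}(X;r)>\frac{l}{2l+1}$, then $X$ is an $\big((l+\frac12)\delta\big)$-covering of $S^1$.
   Context: $S^1$ is the circle of circumference $1$ with arc-length metric; $\vec d(x,y)$ is the clockwise distance from $x$ to $y$. $X$ is an $\varepsilon$-covering of $S^1$ if every point of $S^1$ is at distance less than $\varepsilon$ from some point of $X$. For finite $X$ and $0<r<\frac12$, $\overrightarrow{\mathbf{VR}}_{<}(X;r)$ is the directed graph on $X$ with $x_1\to x_2$ iff $0<\vec d(x_1,x_2)<r$ (a cyclic graph with the clockwise order), and $\mathrm{wf}_{<}(X;r)=\sup\{k/n:\exists$ cyclic homomorphism $\overrightarrow{C_n^k}\to\overrightarrow{\mathbf{VR}}_{<}(X;r)\}$, where $\overrightarrow{C_n^k}$ ($0\le k<n/2$) has vertices $\{0,\dots,n-1\}$ with $i\to j$ iff $0<(j-i)\bmod n\le k$, and a cyclic homomorphism is a vertex map sending each directed edge to a directed edge or a single vertex, whose fibres are sets of cyclically consecutive vertices, that reflects cyclic betweenness ($f(s)\prec f(s')\prec f(s'')$ implies $s\prec s'\prec s''$), and that is non-constant if the source has a directed cycle. *)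

From Stdlib Require Import Reals Lra Lia List Arith.
From Coquelicot Require Import Coquelicot.
Open Scope R_scope.

(* S^1 = R/Z of circumference 1, points represented by reals in [0,1).
   "Clockwise" is the increasing direction of the parameter. *)
Definition on_circle (x : R) : Prop := 0 <= x < 1.

Definition cwd (x y : R) : R := if Rle_dec x y then y - x else y - x + 1.

Definition circ_dist (x y : R) : R := Rmin (cwd x y) (cwd y x).

Definition eps_covering (X : list R) (eps : R) : Prop :=
  forall p, on_circle p -> exists x, In x X /\ circ_dist p x < eps.

Definition cbetween (a b c : R) : Prop := 0 < cwd a b < cwd a c.

Definition vr_edge (r x1 x2 : R) : Prop := 0 < cwd x1 x2 < r.

Definition cmod (n i j : nat) : nat := ((j + n - i) mod n)%nat.
Definition cnk_edge (n k i j : nat) : Prop := (0 < cmod n i j <= k)%nat.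
Definition cbetween_nat (n s s' s'' : nat) : Prop :=
  (0 < cmod n s s' < cmod n s s'')%nat.

Definition cnk_has_dcycle (n k : nat) : Prop :=
  exists (m : nat) (p : nat -> nat), (0 < m)%nat /\ p 0%nat = p m /\
    (forall i, (i <= m)%nat -> (p i < n)%nat) /\
    (forall i, (i < m)%nat -> cnk_edge n k (p i) (p (S i))).

Definition cyclic_hom (n k : nat) (X : list R) (r : R) (f : nat -> R) : Prop :=
  (forall i, (i < n)%nat -> In (f i) X) /\
  (forall i j, (i < n)%nat -> (j < n)%nat -> cnk_edge n k i j ->
      vr_edge r (f i) (f j) \/ f i = f j) /\
  (forall y, exists a m, (a < n)%nat /\ (m <= n)%nat /\
      forall i, (i < n)%nat -> (f i = y <-> (cmod n a i < m)%nat)) /\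
  (forall s s' s'', (s < n)%nat -> (s' < n)%nat -> (s'' < n)%nat ->
      cbetween (f s) (f s') (f s'') -> cbetween_nat n s s' s'') /\
  (cnk_has_dcycle n k -> exists i j, (i < n)%nat /\ (j < n)%nat /\ f i <> f j).

Definition wf_lt (X : list R) (r : R) : Rbar :=
  Lub_Rbar (fun q => exists (n k : nat) (f : nat -> R),
    (2 * k < n)%nat /\ cyclic_hom n k X r f /\ q = INR k / INR n).

(* Suppose a point p has distance at least E from every point of X, and let
   f : C_n^k -> VR_<(X;r) be a cyclic homomorphism with k/n > l/(2l+1).
   Rotate the source so that vertex 0 starts the fibre of the image point
   nearest to p clockwise.  Since f reflects cyclic betweenness, the clockwise
   distance from p to f j is then nondecreasing in j, so j |-> f (j mod n)
   lifts to the universal cover, and every k-step of the lift advances by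
   less than r (a collapsed wrap-around edge would force two short clockwise
   edges in opposite directions, impossible for r < 1/2).  Starting at vertex
   n-1, within 1 - E of p, 2l+1 steps of length k wind more than l times:
   l + 1 + E < 1 - E + (2l+1) r, i.e. E < (l + 1/2)(r - l/(2l+1)). *)

From Stdlib Require Import Reals Lra Lia List Classical.
From Coquelicot Require Import Coquelicot.
Open Scope R_scope.

Lemma mod_cases (n x : nat) : (x < 2 * n)%nat ->
  (x mod n = x /\ x < n \/ x mod n = x - n /\ n <= x)%nat.
Proof.
  intros Hx; destruct (Nat.lt_ge_cases x n) as [Hlt | Hge].
  - left; split; [apply Nat.mod_small|]; lia.
  - right; split; [|lia]. symmetry; apply (Nat.mod_unique _ _ 1); lia.
Qed.

Lemma cmod_le (n i j : nat) : (i <= j < n)%nat -> cmod n i j = (j - i)%nat.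
Proof. intros H; unfold cmod; symmetry; apply (Nat.mod_unique _ _ 1); lia. Qed.

Lemma cmod_gt (n i j : nat) : (j < i < n)%nat -> cmod n i j = (j + n - i)%nat.
Proof. intros H; unfold cmod; apply Nat.mod_small; lia. Qed.

Lemma cmod_rotate (n b i j : nat) : (b < n)%nat -> (i < n)%nat -> (j < n)%nat ->
  cmod n ((b + i) mod n) ((b + j) mod n) = cmod n i j.
Proof.
  intros Hb Hi Hj.
  destruct (mod_cases n (b + i)) as [[-> ?] | [-> ?]]; [lia | |];
  destruct (mod_cases n (b + j)) as [[-> ?] | [-> ?]]; try lia;
  destruct (Nat.le_gt_cases i j);
  rewrite ?(cmod_le n i j), ?(cmod_gt n i j) by lia;
  first [rewrite cmod_le by lia | rewrite cmod_gt by lia]; lia.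
Qed.

Lemma add_mod_sub_cancel (n b a : nat) : (b < n)%nat -> (a < n)%nat ->
  ((b + (a + n - b) mod n) mod n = a)%nat.
Proof.
  intros Hb Ha.
  destruct (mod_cases n (a + n - b)) as [[-> ?] | [-> ?]]; [lia | |].
  - symmetry; apply (Nat.mod_unique _ _ 1); lia.
  - rewrite Nat.mod_small; lia.
Qed.

Definition rotate (n b : nat) (f : nat -> R) (j : nat) : R := f ((b + j) mod n).

Lemma cyclic_hom_rotate (n k b : nat) (X : list R) (r : R) (f : nat -> R) :
  (b < n)%nat -> cyclic_hom n k X r f -> cyclic_hom n k X r (rotate n b f).
Proof.
  intros Hb [Hin [Hedge [Hfib [Hbet Hnc]]]]; unfold rotate.
  assert (Hmod : forall j, ((b + j) mod n < n)%nat) by (intros; apply Nat.mod_upper_bound; lia).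
  split; [|split; [|split; [|split]]].
  - intros i _; apply Hin, Hmod.
  - intros i j Hi Hj Hij; apply Hedge; try apply Hmod.
    unfold cnk_edge; rewrite cmod_rotate; auto.
  - intros y; destruct (Hfib y) as [a [m [Ha [Hm Hy]]]].
    exists ((a + n - b) mod n), m; split; [apply Nat.mod_upper_bound; lia | split; [exact Hm|]].
    intros i Hi; rewrite Hy by apply Hmod.
    rewrite <- (add_mod_sub_cancel n b a) at 1 by lia.
    rewrite cmod_rotate by (auto; apply Nat.mod_upper_bound; lia); tauto.
  - intros s s' s'' Hs Hs' Hs'' H; apply Hbet in H; try apply Hmod.
    unfold cbetween_nat in *; rewrite !cmod_rotate in H; auto.
  - intros Hcyc; destruct (Hnc Hcyc) as [i [j [Hi [Hj Hij]]]].
    exists ((i + n - b) mod n), ((j + n - b) mod n).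
    rewrite !add_mod_sub_cancel by lia.
    repeat split; try apply Nat.mod_upper_bound; lia || auto.
Qed.

Lemma cnk_has_dcycle_full_turn (n k : nat) : (0 < k)%nat -> (1 < n)%nat -> cnk_has_dcycle n k.
Proof.
  intros Hk Hn; exists n, (fun i => i mod n); split; [lia|]; split.
  { rewrite Nat.Div0.mod_same, Nat.mod_small by lia; reflexivity. }
  split; [intros; apply Nat.mod_upper_bound; lia|].
  intros i Hi; rewrite (Nat.mod_small i) by lia; unfold cnk_edge.
  destruct (Nat.eq_dec (S i) n) as [<- | Hne].
  - rewrite Nat.Div0.mod_same, cmod_gt by lia; lia.
  - rewrite Nat.mod_small, cmod_le by lia; lia.
Qed.

Lemma nat_argmin (h : nat -> R) (n : nat) : (0 < n)%nat ->
  exists i, (i < n)%nat /\ forall j, (j < n)%nat -> h i <= h j.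
Proof.
  induction n as [|n IH]; intros Hn; [lia|].
  destruct (Nat.eq_dec n 0) as [-> | Hn0].
  { exists 0%nat; split; [lia|]; intros j Hj; replace j with 0%nat by lia; lra. }
  destruct IH as [i [Hi Hmin]]; [lia|].
  destruct (Rle_dec (h i) (h n)).
  - exists i; split; [lia|]; intros j Hj.
    destruct (Nat.eq_dec j n) as [-> | ]; [lra | apply Hmin; lia].
  - exists n; split; [lia|]; intros j Hj.
    destruct (Nat.eq_dec j n) as [-> | ]; [lra|]; specialize (Hmin j ltac:(lia)); lra.
Qed.

Lemma cwd_shift_le (p x y : R) : on_circle p -> on_circle x -> on_circle y ->
  cwd p x <= cwd p y -> cwd x y = cwd p y - cwd p x.
Proof. unfold on_circle, cwd; intros; repeat destruct Rle_dec; lra. Qed.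

Lemma cwd_shift_gt (p x y : R) : on_circle p -> on_circle x -> on_circle y ->
  cwd p y < cwd p x -> cwd x y = cwd p y - cwd p x + 1.
Proof. unfold on_circle, cwd; intros; repeat destruct Rle_dec; lra. Qed.

Lemma cwd_inj (p x y : R) : on_circle p -> on_circle x -> on_circle y ->
  cwd p x = cwd p y -> x = y.
Proof. unfold on_circle, cwd; intros; repeat destruct Rle_dec; lra. Qed.

Lemma vr_edge_asym (r x y : R) : r <= 1 / 2 -> vr_edge r x y -> vr_edge r y x -> False.
Proof. unfold vr_edge, cwd; intros; repeat destruct Rle_dec; lra. Qed.

Lemma circ_dist_ge_cwd (p x E : R) : on_circle p -> on_circle x ->
  E <= circ_dist p x -> E <= cwd p x <= 1 - E.
Proof. unfold on_circle, circ_dist, cwd, Rmin; intros; repeat destruct Rle_dec; lra. Qed.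

Lemma cyclic_hom_normalize (n k : nat) (X : list R) (r p : R) (f : nat -> R) :
  (0 < n)%nat -> cyclic_hom n k X r f ->
  exists F m, cyclic_hom n k X r F /\
    (forall j, (j < n)%nat -> F j = F 0%nat <-> (j < m)%nat) /\
    (forall j, (j < n)%nat -> cwd p (F 0%nat) <= cwd p (F j)).
Proof.
  intros Hn Hf.
  destruct (nat_argmin (fun i => cwd p (f i)) n Hn) as [i0 [Hi0 Hmin]].
  pose proof Hf as [_ [_ [Hfib _]]].
  destruct (Hfib (f i0)) as [a [m [Ha [_ Hfib0]]]].
  assert (Hstart : forall j, (j < n)%nat -> cmod n a ((a + j) mod n) = j).
  { intros j Hj; rewrite <- (Nat.mod_small a n) at 1 by lia.
    rewrite <- (Nat.add_0_r a) at 1; rewrite cmod_rotate, cmod_le by lia; lia. }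
  assert (Hmod : forall j, ((a + j) mod n < n)%nat) by (intros; apply Nat.mod_upper_bound; lia).
  assert (HF0 : rotate n a f 0%nat = f i0).
  { apply Hfib0; [apply Hmod|]; rewrite Hstart by lia.
    pose proof (proj1 (Hfib0 i0 Hi0) eq_refl); lia. }
  exists (rotate n a f), m; split; [apply cyclic_hom_rotate; [lia | exact Hf]|split].
  - intros j Hj; rewrite HF0; unfold rotate; rewrite Hfib0 by apply Hmod.
    rewrite Hstart by exact Hj; tauto.
  - intros j Hj; rewrite HF0; apply Hmin, Hmod.
Qed.

Lemma increments_iter (g : nat -> R) (k : nat) (r : R) :
  (forall x, g (x + k)%nat - g x < r) ->
  forall j x, g (x + S j * k)%nat < g x + INR (S j) * r.
Proof.
  intros Hstep; induction j as [|j IH]; intros x.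
  - specialize (Hstep x); rewrite Nat.mul_1_l; simpl INR; lra.
  - specialize (Hstep (x + S j * k)%nat); specialize (IH x).
    replace (x + S (S j) * k)%nat with (x + S j * k + k)%nat by lia.
    rewrite (S_INR (S j)); lra.
Qed.

Section NormalizedHom.

Variables (n k m : nat) (X : list R) (r p : R) (F : nat -> R).
Hypothesis HX : forall x, In x X -> on_circle x.
Hypothesis Hp : on_circle p.
Hypothesis Hr0 : 0 < r.
Hypothesis Hr : r <= 1 / 2.
Hypothesis Hk : (0 < k)%nat.
Hypothesis Hkn : (2 * k < n)%nat.
Hypothesis HF : cyclic_hom n k X r F.
Hypothesis Hfib0 : forall j, (j < n)%nat -> F j = F 0%nat <-> (j < m)%nat.
Hypothesis Hmin : forall j, (j < n)%nat -> cwd p (F 0%nat) <= cwd p (F j).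

Local Notation pos j := (cwd p (F j)).

Lemma F_on_circle (j : nat) : (j < n)%nat -> on_circle (F j).
Proof. intros Hj; apply HX, (proj1 HF), Hj. Qed.

Lemma pos_inj (i j : nat) : (i < n)%nat -> (j < n)%nat -> pos i = pos j -> F i = F j.
Proof. intros Hi Hj; apply cwd_inj; auto using F_on_circle. Qed.

Lemma cwd_F_le (i j : nat) : (i < n)%nat -> (j < n)%nat -> pos i <= pos j ->
  cwd (F i) (F j) = pos j - pos i.
Proof. intros Hi Hj; apply cwd_shift_le; auto using F_on_circle. Qed.

Lemma cwd_F_gt (i j : nat) : (i < n)%nat -> (j < n)%nat -> pos j < pos i ->
  cwd (F i) (F j) = pos j - pos i + 1.
Proof. intros Hi Hj; apply cwd_shift_gt; auto using F_on_circle. Qed.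

Lemma F_edge (i j : nat) : (i < n)%nat -> (j < n)%nat -> cnk_edge n k i j ->
  vr_edge r (F i) (F j) \/ F i = F j.
Proof. apply (proj1 (proj2 HF)). Qed.

Lemma fiber0_bounds : (0 < m < n)%nat.
Proof.
  split; [apply Hfib0; auto; lia|].
  destruct (Nat.lt_ge_cases m n) as [|Hmn]; [assumption|exfalso].
  destruct HF as [_ [_ [_ [_ Hnc]]]].
  destruct Hnc as [i [j [Hi [Hj Hij]]]]; [apply cnk_has_dcycle_full_turn; lia|].
  apply Hij; rewrite (proj2 (Hfib0 i Hi)), (proj2 (Hfib0 j Hj)); auto; lia.
Qed.

Lemma pos_mono (a c : nat) : (a <= c < n)%nat -> pos a <= pos c.
Proof.
  intros Hac; destruct (Rle_dec (pos a) (pos c)) as [|Hlt%Rnot_le_lt]; [assumption|exfalso].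
  destruct (Rle_lt_or_eq_dec _ _ (Hmin c ltac:(lia))) as [Hc | Hc].
  - assert (Hbet : cbetween (F 0%nat) (F c) (F a)).
    { unfold cbetween; rewrite !cwd_F_le by (lia || lra); lra. }
    apply (proj1 (proj2 (proj2 (proj2 HF)))) in Hbet; try lia.
    unfold cbetween_nat in Hbet; rewrite !cmod_le in Hbet by lia; lia.
  - apply pos_inj in Hc; [|lia|lia]; symmetry in Hc.
    assert (Ha : F a = F 0%nat) by (apply Hfib0; [lia|]; apply Hfib0 in Hc; lia).
    rewrite Ha, <- Hc in Hlt; lra.
Qed.

Lemma forward_step (u w : nat) : (u < w < n)%nat -> (w - u <= k)%nat -> pos w - pos u < r.
Proof.
  intros Huw Hwu.
  destruct (F_edge u w ltac:(lia) ltac:(lia)) as [[_ Hd] | ->].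
  - unfold cnk_edge; rewrite cmod_le; lia.
  - rewrite cwd_F_le in Hd by (lia || apply pos_mono; lia); lra.
  - lra.
Qed.

Lemma no_detour (u w z : nat) : (u < n)%nat -> (w < n)%nat -> (z < n)%nat ->
  F w = F u -> F z <> F u -> cnk_edge n k u z -> cnk_edge n k z w -> False.
Proof.
  intros Hu Hw Hz Hwu Hzu Huz Hzw.
  destruct (F_edge u z Hu Hz Huz) as [Hfwd | ?]; [|congruence].
  destruct (F_edge z w Hz Hw Hzw) as [Hbwd | ?]; [|congruence].
  rewrite Hwu in Hbwd; exact (vr_edge_asym r _ _ Hr Hfwd Hbwd).
Qed.

(* Otherwise some vertex z on the way from u to w has F z <> F u, and the
   edges u -> z -> w would be two short clockwise arcs covering the circle. *)
Lemma wrap_not_collapsed (u w : nat) : (w < u < n)%nat -> (w + n - u = k)%nat -> F w <> F u.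
Proof.
  intros Hwu Hlen Heq; destruct fiber0_bounds as [Hm0 Hmn].
  destruct (Nat.lt_ge_cases w m) as [Hw | Hw].
  - assert (Hu : (u < m)%nat).
    { apply Hfib0; [lia|]; rewrite <- Heq; apply Hfib0; lia. }
    apply (no_detour u w m); try lia; auto.
    + rewrite <- Heq; intros Hx.
      assert (Hm : F m = F 0%nat) by (rewrite Hx; apply Hfib0; lia).
      apply Hfib0 in Hm; lia.
    + unfold cnk_edge; rewrite cmod_le; lia.
    + unfold cnk_edge; rewrite cmod_gt; lia.
  - apply (no_detour u w 0); try lia; auto.
    + rewrite <- Heq; intros Hx; symmetry in Hx; apply Hfib0 in Hx; lia.
    + unfold cnk_edge; rewrite cmod_gt; lia.
    + unfold cnk_edge; rewrite cmod_le; lia.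
Qed.

Lemma wrap_step (u w : nat) : (w < u < n)%nat -> (w + n - u = k)%nat -> pos w + 1 - pos u < r.
Proof.
  intros Hwu Hlen.
  destruct (F_edge u w ltac:(lia) ltac:(lia)) as [[_ Hd] | Heq].
  - unfold cnk_edge; rewrite cmod_gt; lia.
  - destruct (Rle_lt_or_eq_dec _ _ (pos_mono w u ltac:(lia))) as [Hlt | Heq].
    + rewrite cwd_F_gt in Hd by (lia || lra); lra.
    + apply pos_inj in Heq; [|lia|lia].
      exfalso; exact (wrap_not_collapsed u w Hwu Hlen Heq).
  - exfalso; exact (wrap_not_collapsed u w Hwu Hlen (eq_sym Heq)).
Qed.

Let lift (x : nat) : R := pos (x mod n) + INR (x / n).

Lemma lift_step (x : nat) : lift (x + k)%nat - lift x < r.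
Proof.
  unfold lift.
  assert (Hx := Nat.div_mod_eq x n); assert (Hu := Nat.mod_upper_bound x n ltac:(lia)).
  set (q := (x / n)%nat) in *; set (u := (x mod n)%nat) in *.
  destruct (Nat.lt_ge_cases (u + k) n) as [Hin | Hout].
  - rewrite <- (Nat.mod_unique (x + k) n q (u + k)), <- (Nat.div_unique (x + k) n q (u + k))
      by lia.
    pose proof (forward_step u (u + k) ltac:(lia) ltac:(lia)); lra.
  - rewrite <- (Nat.mod_unique (x + k) n (S q) (u + k - n)),
      <- (Nat.div_unique (x + k) n (S q) (u + k - n)) by lia.
    rewrite S_INR; pose proof (wrap_step u (u + k - n) ltac:(lia) ltac:(lia)); lra.
Qed.

Lemma normalized_gap_bound (E : R) (l : nat) :
  (forall x, In x X -> E <= cwd p x <= 1 - E) -> (l * n < k * (2 * l + 1))%nat ->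
  INR l + 2 * E < INR (2 * l + 1) * r.
Proof.
  intros HE Hlk.
  assert (HEpos : forall j, E <= pos (j mod n) <= 1 - E).
  { intros j; apply HE, (proj1 HF), Nat.mod_upper_bound; lia. }
  pose proof (increments_iter lift k r lift_step (2 * l) (n - 1)) as Hiter.
  replace (S (2 * l)) with (2 * l + 1)%nat in Hiter by lia.
  set (y := (n - 1 + (2 * l + 1) * k)%nat) in Hiter.
  assert (Hstart : lift (n - 1) <= 1 - E).
  { unfold lift; rewrite Nat.div_small by lia; specialize (HEpos (n - 1)%nat); simpl; lra. }
  assert (Hturns : (l + 1 <= y / n)%nat) by (apply Nat.div_le_lower_bound; lia).
  apply le_INR in Hturns; rewrite plus_INR in Hturns; simpl INR in Hturns.
  assert (Hend : E + INR l + 1 <= lift y) by (unfold lift; specialize (HEpos y); lra).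
  lra.
Qed.

End NormalizedHom.

Lemma cyclic_hom_gap_bound (n k l : nat) (X : list R) (r p E : R) (f : nat -> R) :
  (forall x, In x X -> on_circle x) -> on_circle p -> 0 < r -> r <= 1 / 2 ->
  (2 * k < n)%nat -> cyclic_hom n k X r f ->
  (forall x, In x X -> E <= cwd p x <= 1 - E) -> (l * n < k * (2 * l + 1))%nat ->
  INR l + 2 * E < INR (2 * l + 1) * r.
Proof.
  intros HX Hp Hr0 Hr Hkn Hf HE Hlk.
  assert (Hk : (0 < k)%nat) by (destruct k; lia).
  destruct (cyclic_hom_normalize n k X r p f ltac:(lia) Hf) as [F [m [HF [Hfib0 Hmin]]]].
  exact (normalized_gap_bound n k m X r p F HX Hp Hr0 Hr Hk Hkn HF Hfib0 Hmin E l HE Hlk).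
Qed.

Lemma Lub_Rbar_gt_witness (P : R -> Prop) (c : R) :
  Rbar_lt c (Lub_Rbar P) -> exists x, P x /\ c < x.
Proof.
  intros Hlt; apply NNPP; intros Hno.
  destruct (Lub_Rbar_correct P) as [_ Hleast].
  apply (Rbar_lt_not_le _ _ Hlt), Hleast; intros x Hx; simpl.
  apply Rnot_lt_le; intros Hcx; apply Hno; eauto.
Qed.

Lemma INR_div_lt (a b c d : nat) : (0 < b)%nat -> (0 < d)%nat ->
  INR a / INR b < INR c / INR d -> (a * d < c * b)%nat.
Proof.
  intros Hb%lt_0_INR Hd%lt_0_INR Hlt; apply INR_lt; rewrite !mult_INR.
  apply (Rmult_lt_compat_r (INR b * INR d)) in Hlt; [|nra].
  replace (INR a / INR b * (INR b * INR d)) with (INR a * INR d) in Hlt by (field; lra).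
  replace (INR c / INR d * (INR b * INR d)) with (INR c * INR b) in Hlt by (field; lra).
  exact Hlt.
Qed.

Theorem proposition5p4 (l : nat) (r : R) (X : list R)
  (Hr1 : INR l / INR (2 * l + 1) < r) (Hr2 : r < 1 / 2)
  (HX : forall x, In x X -> on_circle x)
  (Hwf : Rbar_lt (Finite (INR l / INR (2 * l + 1))) (wf_lt X r)) :
  eps_covering X ((INR l + 1 / 2) * (r - INR l / INR (2 * l + 1))).
Proof.
  set (E := (INR l + 1 / 2) * (r - INR l / INR (2 * l + 1))).
  assert (Hodd : INR (2 * l + 1) = 2 * INR l + 1) by (rewrite plus_INR, mult_INR; simpl; lra).
  assert (Hl : 0 <= INR l) by apply pos_INR.
  assert (HE : 2 * E = INR (2 * l + 1) * r - INR l) by (unfold E; rewrite Hodd; field; lra).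
  destruct (Lub_Rbar_gt_witness _ _ Hwf) as [q [[n [k [f [Hkn [Hf ->]]]]] Hq]].
  apply INR_div_lt in Hq; [|lia|lia].
  intros p Hp; apply NNPP; intros Huncovered.
  assert (Hfar : forall x, In x X -> E <= cwd p x <= 1 - E).
  { intros x Hx; apply circ_dist_ge_cwd; auto.
    apply Rnot_lt_le; intros Hlt; apply Huncovered; eauto. }
  assert (Hr0 : 0 < r) by (eapply Rle_lt_trans; [|exact Hr1]; apply Rdiv_le_0_compat; lra).
  pose proof (cyclic_hom_gap_bound n k l X r p E f HX Hp Hr0 ltac:(lra) Hkn Hf Hfar Hq).
  lra.
Qed.
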